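(* Let $X$ be a set. For every continuous map $f\colon\mathbb{V}([0,1]^X)\to[0,1]$ there exist an at most countable set $Y$, a continuous map $s\colon[0,1]^Y\to[0,1]$ and a family $(h_y\colon[0,1]^X\to[0,1])_{y\in Y}$ of continuous maps such that $f=s\circ\langle\Box\circ\mathbb{V}h_y\rangle_{y\in Y}$.
   Context: $[0,1]^X$ has the product topology. For a compact Hausdorff space $Z$, $\mathbb{V}Z$ is the set of all closed subsets of $Z$ (including $\varnothing$) with the Vietoris topology, generated by $\{K\mid K\subseteq U\}$ and $\{K\mid K\cap U\neq\varnothing\}$ for $U$ open in $Z$; for continuous $h\colon Z\to W$, $\mathbb{V}h(K)=h[K]$. $\Box\colon\mathbb{V}([0,1])\to[0,1]$ is $K\mapsto\inf K$ (with $\inf\varnothing=1$). For a family of maps $(g_y\colon A\to B_y)_{y\in Y}$, $\langle g_y\rangle_{y\in Y}\colon A\to\prod_y B_y$ is the induced map. *)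

From HB Require Import structures.
From mathcomp Require Import all_boot all_order all_algebra.
From mathcomp Require Import all_classical all_reals all_analysis.
Set Implicit Arguments. Unset Strict Implicit. Unset Printing Implicit Defensive.
Import Order.TTheory GRing.Theory Num.Theory.
Local Open Scope classical_set_scope.
Local Open Scope ring_scope.
Import numFieldNormedType.Exports.

Definition unit_itv (R : realType) : set R := `[0, 1]%classic.
Arguments unit_itv : clear implicits.
Definition I01 (R : realType) : topologicalType := set_type (unit_itv R).

Definition cube (R : realType) (X : Type) : topologicalType := {ptws X -> I01 R}.

(** The hyperspace V Z: the closed subsets of Z with the Vietoris topology,
    generated by the subbase {K | K ⊆ U} and {K | K ∩ U ≠ ∅}, U open. *)
Definition vietoris (Z : topologicalType) : Type := set_type (@closed Z).

HB.instance Definition _ (Z : topologicalType) :=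
  Choice.on (vietoris Z).

Definition vietoris_subbase (Z : topologicalType) (i : bool * set Z)
  : set (vietoris Z) :=
  if i.1 then [set K : vietoris Z | sval K `<=` i.2]
  else [set K : vietoris Z | sval K `&` i.2 !=set0].

HB.instance Definition _ (Z : topologicalType) :=
  isSubBaseTopological.Build (vietoris Z)
    [set i : bool * set Z | open i.2] (@vietoris_subbase Z).

Definition Vmap (Z W : Type) (h : Z -> W) (K : set Z) : set W := h @` K.

(** Box : V([0,1]) -> [0,1], K |-> inf K, with inf of the empty set = 1. *)
Definition box_val (R : realType) (S : set (I01 R)) : R :=
  if pselect (S !=set0) then inf (sval @` S) else 1.

Lemma I01_bounds (R : realType) (y : I01 R) : 0 <= sval y <= 1.
Proof. by have := svalP y; rewrite /unit_itv inE /= in_itv. Qed.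

Lemma box_val_in01 (R : realType) (S : set (I01 R)) :
  box_val S \in unit_itv R.
Proof.
rewrite /box_val /unit_itv; apply/mem_set; destruct (pselect (S !=set0)) as [[x Sx]|nS]; last first.
  by rewrite /= in_itv /= lexx ler01.
have /andP[x0 x1] := I01_bounds x.
rewrite /= in_itv /=; apply/andP; split.
  apply: lb_le_inf; first by exists (sval x), x.
  move=> _ [y _ <-]; by case/andP: (I01_bounds y).
have hl : has_lbound (sval @` S).
  exists 0 => _ [y _ <-]; by case/andP: (I01_bounds y).
apply: le_trans x1; exact: (ge_inf hl (ex_intro2 _ _ x Sx erefl)).
Qed.

Definition box (R : realType) (S : set (I01 R)) : I01 R :=
  exist _ (box_val S) (box_val_in01 S).

From HB Require Import structures.
From mathcomp Require Import all_boot all_order all_algebra.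
From mathcomp Require Import all_classical all_reals all_analysis.
From mathcomp Require Import lra.
Set Implicit Arguments.
Unset Strict Implicit.
Unset Printing Implicit Defensive.
Import Order.TTheory GRing.Theory Num.Theory.
Import numFieldNormedType.Exports.
Local Open Scope classical_set_scope.
Local Open Scope ring_scope.

(* Call g : V([0,1]^X) -> R *boxed* if g = t \o Phi_hs for a sequence
   hs = (h_n)_n of continuous maps [0,1]^X -> [0,1] and a continuous
   t : [0,1]^N -> R, where Phi_hs K = (inf h_n[K])_n.  The proof has four parts.
   1. V Z is compact when Z is, and K |-> inf h[K] is continuous; so boxed
      functions are continuous functions on the compact space V([0,1]^X).
   2. Boxed functions contain the constants, are closed under min and max
      (interleave the two sequences h_n) and interpolate any function at two
      points, because Urysohn functions tell distinct closed sets apart by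
      their infima.
   3. By the lattice form of the Stone-Weierstrass theorem (Kakutani-Krein),
      proved below for an arbitrary compact space, f is a uniform limit of
      boxed functions t_n \o Phi_(hs_n) with error 2^-n.
   4. A clipped telescoping of the t_n, each reading its own copy of N inside
      Y = N * N, converges uniformly to a continuous s with s \o Phi = f. *)

Section RealFacts.
Variable R : realType.

Definition clip (x lo hi : R) : R := Num.max lo (Num.min x hi).

Lemma clip_id (x lo hi : R) : lo <= x -> x <= hi -> clip x lo hi = x.
Proof. by move=> h1 h2; rewrite /clip (min_l h2) (max_r h1). Qed.

Lemma clip_bnd (x lo hi : R) : lo <= hi -> lo <= clip x lo hi <= hi.
Proof. by move=> lh; rewrite /clip le_max lexx /= ge_max lh /= ge_min lexx orbT. Qed.

Lemma clip_continuous (T : topologicalType) (u lo hi : T -> R) :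
  continuous u -> continuous lo -> continuous hi ->
  continuous (fun x => clip (u x) (lo x) (hi x)).
Proof.
move=> cu cl ch x.
have cmin : {for x, continuous (fun x => Num.min (u x) (hi x))}.
  exact: (@continuous_min R T u hi x (cu x) (ch x)).
exact: (@continuous_max R T lo _ x (cl x) cmin).
Qed.

Lemma continuous_addr (T : topologicalType) (u : T -> R) (c : R) :
  continuous u -> continuous (fun x => u x + c).
Proof.
move=> cu x; apply: (@continuousD R R^o T u (fun=> c) x (cu x)).
exact: cst_continuous.
Qed.

Lemma continuous_affine (T : topologicalType) (u : T -> R) (c k a : R) :
  continuous u -> continuous (fun x => c + k * (u x - a)).
Proof.
move=> cu x; have cst (r : R) : {for x, continuous (fun=> r)} by exact: cst_continuous.
have cB : {for x, continuous (fun x => u x - a)}.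
  exact: (@continuousB R R^o T u (fun=> a) x (cu x) (cst a)).
have cM : {for x, continuous (fun x => k * (u x - a))}.
  exact: (@continuousM R T (fun=> k) _ x (cst k) cB).
exact: (@continuousD R R^o T (fun=> c) _ x (cst c) cM).
Qed.

Lemma open_lt_fun (T : topologicalType) (u v : T -> R) :
  continuous u -> continuous v -> open [set x | u x < v x].
Proof.
move=> cu cv.
have cw : continuous (fun x => v x - u x) by move=> x; apply: cvgB; [exact: cv|exact: cu].
have -> : [set x | u x < v x] = (fun x => v x - u x) @^-1` [set r | 0 < r].
  by apply/seteqP; split => x /=; rewrite subr_gt0.
by move/continuousP : cw; apply; exact: open_gt.
Qed.

Definition en (n : nat) : R := ((2 : R) ^+ n)^-1.

Lemma en_gt0 n : 0 < en n.
Proof. by rewrite /en invr_gt0 exprn_gt0. Qed.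

Lemma en_S n : en n = 2 * en n.+1.
Proof. by rewrite /en exprS invfM mulrA mulfV ?mul1r. Qed.

Lemma en_small (d : R) : 0 < d -> exists n, en n < d.
Proof.
move=> d0; set k := (Num.truncn d^-1).+1; exists k.
have k_le : (k%:R : R) <= 2 ^+ k by rewrite -natrX ler_nat ltnW // ltn_expl.
have dk : d^-1 < 2 ^+ k by exact: lt_le_trans (truncnS_gt _) k_le.
rewrite /en -div1r ltr_pdivrMr ?exprn_gt0 //.
by rewrite -(ltr_pM2l d0) mulfV ?gt_eqF in dk.
Qed.
End RealFacts.
Arguments en {R} n.

Section LatticeApproximation.
Variables (R : realType) (T : ptopologicalType).
Variable L : (T -> R) -> Prop.
Hypothesis L_continuous : forall g, L g -> continuous g.
Hypothesis L_min : forall g1 g2, L g1 -> L g2 -> L (fun x => Num.min (g1 x) (g2 x)).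
Hypothesis L_max : forall g1 g2, L g1 -> L g2 -> L (fun x => Num.max (g1 x) (g2 x)).
Variable f : T -> R.
Hypothesis f_continuous : continuous f.
Hypothesis L_interp : forall p q, exists g, [/\ L g, g p = f p & g q = f q].
Hypothesis T_compact : compact [set: T].

Let T_cover_compact : cover_compact [set: T].
Proof. by rewrite -compact_cover. Qed.

Definition foldp (op : R -> R -> R) (G : T -> T -> R) (s : seq T) (g0 : T -> R) :=
  foldr (fun q g x => op (G q x) (g x)) g0 s.

Lemma foldp_L op G s g0 :
  (forall g1 g2, L g1 -> L g2 -> L (fun x => op (g1 x) (g2 x))) ->
  (forall q, L (G q)) -> L g0 -> L (foldp op G s g0).
Proof. by move=> Lop LG Lg0; elim: s => //= q s IH; exact: Lop. Qed.

Lemma foldp_ind (op : R -> R -> R) G s g0 x (P : R -> Prop) :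
  (forall a b, op a b = a \/ op a b = b) ->
  P (g0 x) -> (forall q, q \in s -> P (G q x)) -> P (foldp op G s g0 x).
Proof.
move=> opab P0 PG; elim: s PG => //= q s IH PG.
have Ps : P (foldp op G s g0 x) by apply: IH => q' q's; apply: PG; rewrite in_cons q's orbT.
by case: (opab (G q x) (foldp op G s g0 x)) => ->; [apply: PG; rewrite mem_head|].
Qed.

Lemma min_or (a b : R) : Num.min a b = a \/ Num.min a b = b.
Proof. by case: leP; [left|right]. Qed.

Lemma max_or (a b : R) : Num.max a b = a \/ Num.max a b = b.
Proof. by case: leP; [right|left]. Qed.

Lemma foldp_min_le G s g0 x q : q \in s -> foldp Num.min G s g0 x <= G q x.
Proof.
elim: s => //= q' s IH; rewrite in_cons => /orP[/eqP->|qs]; first by rewrite ge_min lexx.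
by rewrite ge_min IH ?orbT.
Qed.

Lemma foldp_max_ge G s g0 x q : q \in s -> G q x <= foldp Num.max G s g0 x.
Proof.
elim: s => //= q' s IH; rewrite in_cons => /orP[/eqP->|qs]; first by rewrite le_max lexx.
by rewrite le_max IH ?orbT.
Qed.

(* Minimum over a finite cover: a member of L above f at p and below f + e. *)
Lemma lattice_upper_at (e : R) (p : T) : 0 < e ->
  exists g, [/\ L g, f p <= g p & forall r, g r < f r + e].
Proof.
move=> e_gt0; have [G hG] := choice (L_interp p).
have LG q : L (G q) by case: (hG q).
have Gopen q : setT q -> open [set r | G q r < f r + e].
  by move=> _; apply: open_lt_fun; [exact/L_continuous|exact: continuous_addr].
have Gcover : [set: T] `<=` cover setT (fun q => [set r | G q r < f r + e]).
  by move=> r _; exists r => //=; case: (hG r) => _ _ ->; rewrite ltrDl.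
have [D _ cov] := T_cover_compact Gopen Gcover.
exists (foldp Num.min G (finmap.enum_fset D) (G p)); split.
- exact: foldp_L L_min LG (LG p).
- apply: (@foldp_ind _ _ _ _ _ (fun v => f p <= v) min_or); first by case: (hG p) => _ ->.
  by move=> q _; case: (hG q) => _ ->.
- move=> r; have [q Dq Gqr] := cov r I.
  by apply: le_lt_trans Gqr; apply: foldp_min_le.
Qed.

(* Maximum over a finite cover of the functions of lattice_upper_at. *)
Lemma lattice_approx (e : R) : 0 < e -> exists g, L g /\ forall x, `|f x - g x| < e.
Proof.
move=> e_gt0; have [G hG] := choice (fun p => lattice_upper_at p e_gt0).
have LG q : L (G q) by case: (hG q).
have Gopen p : setT p -> open [set r | f r - e < G p r].
  by move=> _; apply: open_lt_fun; [exact: continuous_addr|exact/L_continuous].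
have Gcover : [set: T] `<=` cover setT (fun p => [set r | f r - e < G p r]).
  by move=> r _; exists r => //=; case: (hG r) => _ fr _; lra.
have [D _ cov] := T_cover_compact Gopen Gcover.
exists (foldp Num.max G (finmap.enum_fset D) (G point)); split.
  exact: foldp_L L_max LG (LG point).
move=> x; rewrite ltr_norml; apply/andP; split.
  rewrite ltrNl opprB ltrBlDl.
  apply: (@foldp_ind _ _ _ _ _ (fun v => v < f x + e) max_or); first by case: (hG point).
  by move=> q _; case: (hG q).
have [q Dq Gqx] := cov x I.
by rewrite ltrBlDl -ltrBlDr; apply: lt_le_trans Gqx _; apply: foldp_max_ge.
Qed.
End LatticeApproximation.

(* Exact factorization from fast approximation: if f = lim u_n \o w with
   |f - u_n \o w| < 2^-n and all u_n continuous, then f = S \o w for one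
   continuous S.  S is the uniform limit of the sequence glue_seq, in which
   u_(n+1) is clipped to the band of width 3 * 2^-(n+1) around glue_seq n;
   on the image of w the clipping is inactive. *)
Section Glue.
Variables (R : realType) (W : topologicalType) (A : Type).
Variables (f : A -> R) (w : A -> W) (u : nat -> W -> R).
Hypothesis u_continuous : forall n, continuous (u n).
Hypothesis u_approx : forall n a, `|f a - u n (w a)| < en n.

Fixpoint glue_seq (n : nat) (z : W) : R :=
  match n with
  | 0 => u 0 z
  | n'.+1 => clip (u n'.+1 z) (glue_seq n' z - 3 * en n'.+1)
                               (glue_seq n' z + 3 * en n'.+1)
  end.

Lemma glue_seq_continuous n : continuous (glue_seq n).
Proof.
elim: n => [|n IH] /=; first exact: u_continuous.
by apply: clip_continuous; [exact: u_continuous|exact: continuous_addr|exact: continuous_addr].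
Qed.

Lemma glue_seq_step n z : `|glue_seq n.+1 z - glue_seq n z| <= 3 * en n.+1.
Proof.
have e0 := @en_gt0 R n.+1.
have /andP[lo hi] /= := @clip_bnd R (u n.+1 z)
  (glue_seq n z - 3 * en n.+1) (glue_seq n z + 3 * en n.+1) ltac:(lra).
rewrite ler_norml; apply/andP; split; lra.
Qed.

Lemma glue_seq_approx n a : `|glue_seq n (w a) - f a| < en n.
Proof.
elim: n => [|n IH] /=; first by have := u_approx 0 a; rewrite (@distrC _ _ (f a)).
have := u_approx n.+1 a; have := @en_S R n.
move: IH; rewrite !ltr_norml => /andP[a1 a2] es /andP[b1 b2].
by rewrite clip_id ?ltr_norml; [apply/andP; split; lra|lra|lra].
Qed.

Definition glue_hi n z := glue_seq n z + 3 * en n.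
Definition glue_lo n z := glue_seq n z - 3 * en n.

Lemma glue_hi_nonincreasing z : nonincreasing_seq (glue_hi ^~ z).
Proof.
apply/nonincreasing_seqP => n; have := glue_seq_step n z; have := @en_S R n.
by rewrite /glue_hi ler_norml => es /andP[h1 h2]; lra.
Qed.

Lemma glue_lo_nondecreasing z : nondecreasing_seq (glue_lo ^~ z).
Proof.
apply/nondecreasing_seqP => n; have := glue_seq_step n z; have := @en_S R n.
by rewrite /glue_lo ler_norml => es /andP[h1 h2]; lra.
Qed.

Lemma glue_lo_le_hi n m z : glue_lo n z <= glue_hi m z.
Proof.
apply: le_trans (glue_lo_nondecreasing z (leq_maxl n m)) _.
apply: le_trans _ (glue_hi_nonincreasing z (leq_maxr n m)).
by rewrite /glue_lo /glue_hi; have := @en_gt0 R (maxn n m); lra.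
Qed.

Definition glue_lim z := inf (range (glue_hi ^~ z)).

Lemma glue_lim_near n z : `|glue_lim z - glue_seq n z| <= 3 * en n.
Proof.
have lo : glue_lo n z <= glue_lim z.
  apply: lb_le_inf; first by exists (glue_hi 0 z), 0%N.
  by move=> _ [m _ <-]; exact: glue_lo_le_hi.
have hi : glue_lim z <= glue_hi n z.
  apply: ge_inf; last by exists n.
  by exists (glue_lo 0 z) => _ [m _ <-]; exact: glue_lo_le_hi.
by move: lo hi; rewrite /glue_lo /glue_hi ler_norml => lo hi; apply/andP; split; lra.
Qed.

Lemma glue_lim_continuous : continuous glue_lim.
Proof.
move=> z; apply/cvgrPdist_lt => e e0.
have [n hn] := @en_small R (e / 12 : R) ltac:(by rewrite divr_gt0).
have /cvgrPdist_lt /(_ (e / 2) ltac:(by rewrite divr_gt0)) := @glue_seq_continuous n z.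
apply: filterS => y hy.
have := glue_lim_near n z; have := glue_lim_near n y.
move: hy; rewrite !ler_norml !ltr_norml => /andP[c1 c2] /andP[b1 b2] /andP[a1 a2].
by apply/andP; split; lra.
Qed.

Lemma glue_lim_factor a : glue_lim (w a) = f a.
Proof.
have close n : `|glue_lim (w a) - f a| < 4 * en n.
  have := glue_lim_near n (w a); have := glue_seq_approx n a.
  rewrite ler_norml !ltr_norml => /andP[a1 a2] /andP[b1 b2]; apply/andP; split; lra.
apply/eqP; rewrite -subr_eq0 -normr_le0 leNgt; apply/negP => d0.
have [n hn] := @en_small R (`|glue_lim (w a) - f a| / 4) ltac:(by rewrite divr_gt0).
by have := close n; lra.
Qed.
End Glue.

Section UnitCube.
Variable R : realType.

Lemma I01_val_continuous : continuous (fun x : I01 R => sval x).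
Proof. exact: initial_continuous. Qed.

Lemma continuous_to_I01 (T : topologicalType) (g : T -> I01 R) :
  continuous (fun t => sval (g t)) -> continuous g.
Proof. by move=> cg; exact: (@continuous_comp_initial _ _ _ (@set_val R (unit_itv R))). Qed.

Lemma clip01_in (r : R) : clip r 0 1 \in unit_itv R.
Proof. by apply/mem_set; rewrite /unit_itv /= in_itv /= clip_bnd. Qed.

Definition to01 (r : R) : I01 R := exist _ (clip r 0 1) (clip01_in r).

Lemma to01_continuous : continuous to01.
Proof.
apply: continuous_to_I01; apply: clip_continuous => x; first exact: cvg_id.
- exact: cst_continuous.
- exact: cst_continuous.
Qed.

Lemma to01_val (x : I01 R) : to01 (sval x) = x.
Proof. by apply: val_inj; rewrite /= clip_id //; case/andP: (I01_bounds x). Qed.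

(* [0,1] is compact as the continuous image of the segment. *)
Lemma compact_I01 : compact [set: I01 R].
Proof.
have -> : [set: I01 R] = to01 @` `[0, 1].
  apply/seteqP; split => // y _; exists (sval y); last exact: to01_val.
  by rewrite /= in_itv; exact: I01_bounds.
apply: continuous_compact; last exact: segment_compact.
by apply: continuous_subspaceT => x; exact: to01_continuous.
Qed.

Lemma compact_cube (I : Type) : compact [set: cube R I].
Proof.
have := @tychonoff {classic I} (fun _ => I01 R) (fun _ => setT) (fun _ => compact_I01).
by congr compact; apply/seteqP; split.
Qed.

Lemma cube_proj_continuous (I : Type) (i : I) : continuous (fun z : cube R I => z i).
Proof. exact: (@proj_continuous {classic I} (fun _ => I01 R) i). Qed.

Lemma continuous_to_cube (I : Type) (T : topologicalType) (g : T -> cube R I) :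
  (forall i, continuous (fun t => g t i)) -> continuous g.
Proof.
move=> cg t; apply/cvg_sup => i U [_ /= [[W oW <-]]] /= Wg /filterS; apply.
by apply: (cg i); exact: open_nbhs_nbhs.
Qed.
End UnitCube.

Section BoxVal.
Variable R : realType.
Implicit Types S : set (I01 R).

Lemma box_val_le S y : S y -> box_val S <= sval y.
Proof.
move=> Sy; rewrite /box_val; destruct (pselect (S !=set0)) as [S0|nS]; last by case: nS; exists y.
apply: ge_inf; last by exists y.
by exists 0 => _ [z _ <-]; case/andP: (I01_bounds z).
Qed.

Lemma box_val_ge S m : m <= 1 -> (forall y, S y -> m <= sval y) -> m <= box_val S.
Proof.
move=> m1 Sm; rewrite /box_val; destruct (pselect (S !=set0)) as [[y Sy]|] => //.
apply: lb_le_inf; first by exists (sval y), y.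
by move=> _ [z Sz <-]; exact: Sm.
Qed.

Lemma box_val_le1 S : box_val S <= 1.
Proof. by have := box_val_in01 S; rewrite /unit_itv inE /= in_itv => /andP[]. Qed.

Lemma box_val_approx S e : S !=set0 -> 0 < e ->
  exists2 y, S y & sval y < box_val S + e.
Proof.
move=> S0 e0; rewrite /box_val; destruct (pselect (S !=set0)) => //.
have Sinf : has_inf (sval @` S).
  split; first by case: S0 => y Sy; exists (sval y), y.
  by exists 0 => _ [z _ <-]; case/andP: (I01_bounds z).
by have [_ [y Sy <-] lt] := inf_adherent e0 Sinf; exists y.
Qed.

Lemma box_val_set0 S : ~ (S !=set0) -> box_val S = 1.
Proof. by move=> S0; rewrite /box_val; destruct (pselect (S !=set0)). Qed.
End BoxVal.

(* The empty set is a point of every hyperspace (needed for compact_cover). *)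
HB.instance Definition _ (Z : topologicalType) :=
  isPointed.Build (vietoris Z) (exist _ set0 (mem_set closed0)).

Section Vietoris.
Variable Z : topologicalType.

Lemma vietoris_subbase_open (i : bool * set Z) :
  open i.2 -> open (vietoris_subbase i).
Proof.
move=> oi; exists [set vietoris_subbase i]; last by rewrite bigcup_set1.
by move=> _ ->; exact: finI_from1.
Qed.

Lemma vietoris_cvg (F : set_system (vietoris Z)) (K : vietoris Z) : Filter F ->
  (forall i, open i.2 -> vietoris_subbase i K -> F (vietoris_subbase i)) -> F --> K.
Proof.
move=> FF FK A; rewrite nbhsE => -[B [[D sD <-] [C DC CK] BA]].
apply: filterS BA _; apply: (@filterS _ _ _ C); first by move=> L CL; exists C.
have [E sE eC] := sD C DC; rewrite -eC; apply: filter_bigI => i Ei.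
have := sE i Ei; rewrite inE => oi; apply: FK => //.
by move: CK; rewrite -eC; apply.
Qed.

(* The hyperspace of a compact space is compact: the limit of an ultrafilter
   F is the set of points all of whose open neighbourhoods U are eventually
   hit, i.e. satisfy F [set K | K meets U]. *)
Lemma vietoris_compact : compact [set: Z] -> compact [set: vietoris Z].
Proof.
move=> cZ; rewrite compact_ultra => F FU _.
have PF : ProperFilter F := @ultra_proper _ F FU.
have FF : Filter F := PF.
pose hits (U : set Z) := vietoris_subbase (false, U).
pose Ks := [set x : Z | forall U, open U -> U x -> F (hits U)].
have cKs : closed Ks.
  move=> x clx U oU Ux.
  by have [y [Ky Uy]] := clx U (open_nbhs_nbhs (conj oU Ux)); exact: Ky.
exists (exist _ Ks (mem_set cKs)); split => //.
apply: vietoris_cvg => -[[] U] /= oU; last by move=> [x [Kx Ux]]; exact: Kx.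
move=> KsU; have [//|nF] := in_ultra_setVsetC [set K : vietoris Z | sval K `<=` U] FU.
exfalso.
pose G := [set B : set Z | F [set K : vietoris Z | sval K `&` ~` U `<=` B]].
have FG : ProperFilter G.
  apply: Build_ProperFilter.
    move=> G0; apply: (@filter_not_empty _ F PF).
    apply: (filterS _ (@filterI _ F FF _ _ G0 nF)) => K [/= K0 KU]; apply: KU => y Ky.
    by apply: contrapT => nUy; exact: (K0 y (conj Ky nUy)).
  constructor.
  - by apply: (filterS _ (@filterT _ F FF)).
  - move=> B1 B2 GB1 GB2; apply: (filterS _ (@filterI _ F FF _ _ GB1 GB2)) => K [h1 h2] y Ky.
    by split; [exact: h1|exact: h2].
  - move=> B1 B2 B12 GB1; apply: (@filterS _ F FF _ _ _ GB1) => K h y Ky.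
    by apply: B12; exact: h.
have cC : compact (~` U) by apply: subclosed_compact cZ _ => //; rewrite closedC.
have GnU : G (~` U) by apply: (filterS _ (@filterT _ F FF)) => K _ y [].
have [x [nUx clx]] := cC G FG GnU.
have /existsNP [U' /not_implyP [oU' /not_implyP [U'x nFU']]] : ~ Ks x.
  by move=> /KsU.
have [//|FnU'] := in_ultra_setVsetC (hits U') FU.
have GU' : G (~` U').
  by apply: (filterS _ FnU') => K /= nm y [Ky _] U'y; apply: nm; exists y.
by have [y [ny Uy]] := clx _ _ GU' (open_nbhs_nbhs (conj oU' U'x)); exact: ny.
Qed.
End Vietoris.

Section BoxContinuity.
Variables (R : realType) (Z : topologicalType) (h : Z -> I01 R).
Hypothesis h_continuous : continuous h.

Let hval_continuous : continuous (fun x => sval (h x)).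
Proof. by move=> x; apply: continuous_comp; [exact: h_continuous|exact: I01_val_continuous]. Qed.

(* Lower semicontinuity: K stays inside the open set [h > a]. *)
Lemma box_val_ge_near (K0 : vietoris Z) (a : R) :
  a < box_val (Vmap h (sval K0)) ->
  nbhs K0 [set K : vietoris Z | a <= box_val (Vmap h (sval K))].
Proof.
move=> aK0; pose U := [set x | a < sval (h x)].
have oU : open U by apply: open_lt_fun; [exact: cst_continuous|exact: hval_continuous].
apply: (filterS _ (@open_nbhs_nbhs _ _ (vietoris_subbase (true, U)) _)).
  move=> K /= KU; apply: box_val_ge; first exact: le_trans (ltW aK0) (box_val_le1 _).
  by move=> _ [x Kx <-]; apply: ltW; exact: KU.
split; first exact: vietoris_subbase_open.
by move=> x K0x; apply: lt_le_trans aK0 _; apply: box_val_le; exists x.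
Qed.

(* Upper semicontinuity: K keeps meeting the open set [h < b]. *)
Lemma box_val_lt_near (K0 : vietoris Z) (b : R) :
  box_val (Vmap h (sval K0)) < b ->
  nbhs K0 [set K : vietoris Z | box_val (Vmap h (sval K)) < b].
Proof.
move=> K0b; have [K0_0|K0_empty] := pselect (Vmap h (sval K0) !=set0); last first.
  apply: (filterS _ (@open_nbhs_nbhs _ _ setT (conj openT I))) => K _.
  by apply: le_lt_trans (box_val_le1 _) _; move: K0b; rewrite box_val_set0.
have gap : 0 < b - box_val (Vmap h (sval K0)) by rewrite subr_gt0.
have [_ [x K0x <-] hxb] := box_val_approx K0_0 gap.
rewrite addrC subrK in hxb; pose U := [set x | sval (h x) < b].
apply: (filterS _ (@open_nbhs_nbhs _ _ (vietoris_subbase (false, U)) _)).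
  by move=> K /= [z [Kz Uz]]; apply: le_lt_trans Uz; apply: box_val_le; exists z.
split; last by exists x.
apply: vietoris_subbase_open; apply: open_lt_fun; [exact: hval_continuous|exact: cst_continuous].
Qed.

Lemma box_continuous : continuous (fun K : vietoris Z => box (Vmap h (sval K))).
Proof.
move=> K0; apply: continuous_to_I01 => {}K0.
have NF : Filter (nbhs K0) := nbhs_filter K0; move: NF; rewrite /nbhs /= => NF.
apply/cvgrPdist_lt => e e0 /=; set c := box_val _.
have ce : c - e / 2 < c by rewrite ltrBlDr ltrDl divr_gt0.
have ec : c < c + e by rewrite ltrDl.
apply: (filterS _ (filterI (box_val_ge_near ce) (box_val_lt_near ec))) => K [/= lo hi].
by rewrite ltr_norml; apply/andP; split; lra.
Qed.
End BoxContinuity.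

Section Separation.
Variables (R : realType) (X : Type).

(* If x is in A but not in the closed set B, a Urysohn function h with
   h x = 0 and h = 1 on B gives Box (V h A) = 0 < 1 = Box (V h B). *)
Lemma urysohn_box_lt (A B : set (cube R X)) (x : cube R X) :
  closed B -> A x -> ~ B x -> exists h : cube R X -> I01 R,
    continuous h /\ box_val (Vmap h A) < box_val (Vmap h B).
Proof.
move=> cB Ax nBx.
have sep := @point_uniform_separator R {ptws X -> set_type (unit_itv R)} x B cB nBx.
pose u := Urysohn (R := R) [set x] B; pose h z := to01 (u z).
exists h; split.
  by move=> z; apply: continuous_comp; [exact: Urysohn_continuous|exact: to01_continuous].
have u0 : u x = 0 by apply: (Urysohn_sub0 sep); exists x.
have u1 z : B z -> u z = 1 by move=> Bz; apply: (Urysohn_sub1 sep); exists z.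
apply: (@le_lt_trans _ _ 0).
  have : box_val (Vmap h A) <= sval (h x) by apply: box_val_le; exists x.
  by rewrite /= u0 clip_id // ler01.
apply: (@lt_le_trans _ _ 1); first exact: ltr01.
by apply: box_val_ge => // _ [z Bz <-] /=; rewrite u1 // clip_id // ler01.
Qed.

Lemma box_separates (p q : vietoris (cube R X)) : p <> q ->
  exists h : cube R X -> I01 R,
    continuous h /\ box_val (Vmap h (sval p)) != box_val (Vmap h (sval q)).
Proof.
move=> pq; have closed_sval (K : vietoris (cube R X)) : closed (sval K).
  by have := svalP K; rewrite inE.
have [x pqx] : exists x, ~ (sval p x <-> sval q x).
  apply/existsNP => same; apply: pq; apply: val_inj; rewrite predeqE; exact: same.
have [px|npx] := pselect (sval p x).
  have [|h [ch lt]] := urysohn_box_lt (closed_sval q) px; first by move=> qx; apply: pqx.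
  by exists h; split => //; rewrite lt_eqF.
have qx : sval q x by apply: contrapT => nqx; apply: pqx; split.
have [h [ch lt]] := urysohn_box_lt (closed_sval p) qx npx.
by exists h; split => //; rewrite gt_eqF.
Qed.
End Separation.

Section Boxed.
Variables (R : realType) (X : Type).
Local Notation V := (vietoris (cube R X)).

Definition Phi (hs : nat -> cube R X -> I01 R) (K : V) : cube R nat :=
  fun n => box (Vmap (hs n) (sval K)).

Definition boxed (g : V -> R) := exists (hs : nat -> cube R X -> I01 R) (t : cube R nat -> R),
  [/\ forall n, continuous (hs n), continuous t & forall K, g K = t (Phi hs K)].

Lemma boxed_continuous g : boxed g -> continuous g.
Proof.
move=> [hs [t [chs ct eg]]]; have -> : g = t \o Phi hs by apply: funext.
move=> K; apply: continuous_comp; last exact: ct.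
by apply: continuous_to_cube => n; exact: box_continuous.
Qed.

Lemma boxed_const c : boxed (fun _ => c).
Proof.
exists (fun _ _ => to01 0), (fun _ => c); split => // *; exact: cst_continuous.
Qed.

Definition interleave (hs1 hs2 : nat -> cube R X -> I01 R) n :=
  if odd n then hs2 n./2 else hs1 n./2.
Definition evens (z : cube R nat) : cube R nat := fun n => z n.*2.
Definition odds (z : cube R nat) : cube R nat := fun n => z n.*2.+1.

Lemma evens_interleave hs1 hs2 K : evens (Phi (interleave hs1 hs2) K) = Phi hs1 K.
Proof. by apply: funext => n; rewrite /evens /Phi /interleave odd_double doubleK. Qed.

Lemma odds_interleave hs1 hs2 K : odds (Phi (interleave hs1 hs2) K) = Phi hs2 K.
Proof. by apply: funext => n; rewrite /odds /Phi /interleave /= odd_double uphalf_double. Qed.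

Lemma boxed_op (op : R -> R -> R) g1 g2 :
  (forall (T : topologicalType) (u v : T -> R), continuous u -> continuous v ->
     continuous (fun x => op (u x) (v x))) ->
  boxed g1 -> boxed g2 -> boxed (fun K => op (g1 K) (g2 K)).
Proof.
move=> cop [hs1 [t1 [ch1 ct1 e1]]] [hs2 [t2 [ch2 ct2 e2]]].
exists (interleave hs1 hs2), (fun z => op (t1 (evens z)) (t2 (odds z))); split.
- by move=> n; rewrite /interleave; case: odd.
- have cevens : continuous evens by apply: continuous_to_cube => n; exact: cube_proj_continuous.
  have codds : continuous odds by apply: continuous_to_cube => n; exact: cube_proj_continuous.
  by apply: cop => z; apply: continuous_comp; [exact: cevens|exact: ct1|exact: codds|exact: ct2].
- by move=> K; rewrite evens_interleave odds_interleave e1 e2.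
Qed.

Lemma boxed_min g1 g2 : boxed g1 -> boxed g2 -> boxed (fun K => Num.min (g1 K) (g2 K)).
Proof. by apply: boxed_op => T u v cu cv x; exact: (continuous_min (cu x) (cv x)). Qed.

Lemma boxed_max g1 g2 : boxed g1 -> boxed g2 -> boxed (fun K => Num.max (g1 K) (g2 K)).
Proof. by apply: boxed_op => T u v cu cv x; exact: (continuous_max (cu x) (cv x)). Qed.

(* Two-point interpolation: an affine function of one box separating p, q. *)
Lemma boxed_interpolate (f : V -> R) (p q : V) :
  exists g, [/\ boxed g, g p = f p & g q = f q].
Proof.
have [<-|pq] := pselect (p = q); first by exists (fun _ => f p); split => //; exact: boxed_const.
have [h [ch hpq]] := box_separates pq.
set a := box_val (Vmap h (sval p)) in hpq *; set b := box_val (Vmap h (sval q)) in hpq *.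
have ba : b - a != 0 by rewrite subr_eq0 eq_sym.
pose k := (f q - f p) / (b - a).
pose t (z : cube R nat) := f p + k * (sval (z 0%N) - a).
exists (t \o Phi (fun _ => h)); split.
- exists (fun _ => h), t; split => //.
  apply: continuous_affine => z.
  by apply: continuous_comp; [exact: cube_proj_continuous|exact: I01_val_continuous].
- by rewrite /t /= -/a subrr mulr0 addr0.
- by rewrite /t /= -/b /k mulrAC -mulrA divff // mulr1 addrC subrK.
Qed.
Lemma boxed_dense (f : V -> R) (e : R) : continuous f -> 0 < e ->
  exists g, boxed g /\ forall K, `|f K - g K| < e.
Proof.
move=> cf e_gt0; apply: (lattice_approx (@boxed_continuous) (@boxed_min) (@boxed_max) cf).
- exact: boxed_interpolate.
- exact: vietoris_compact (@compact_cube R X).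
- exact: e_gt0.
Qed.
End Boxed.

Theorem theorem5p10 (R : realType) (X : Type)
    (f : vietoris (cube R X) -> I01 R) :
  continuous f ->
  exists (Y : Type) (s : cube R Y -> I01 R) (h : Y -> cube R X -> I01 R),
    [/\ countable [set: Y], continuous s,
        (forall y, continuous (h y)) &
        f = s \o (fun K : vietoris (cube R X) =>
                    (fun y => box (Vmap (h y) (sval K))) : cube R Y)].
Proof.
move=> cf; pose fv K := sval (f K).
have cfv : continuous fv.
  by move=> K; apply: continuous_comp; [exact: cf|exact: I01_val_continuous].
have approx n : exists ht : (nat -> cube R X -> I01 R) * (cube R nat -> R),
    [/\ forall k, continuous (ht.1 k), continuous ht.2 &
        forall K, `|fv K - ht.2 (Phi ht.1 K)| < en n].
  have [g [[hs [t [chs ct eg]]] hg]] := boxed_dense cfv (@en_gt0 R n).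
  by exists (hs, t); split => // K /=; rewrite -eg.
have [ht hht] := choice approx.
(* Gluing: the n-th approximation reads the copy {n} * N of N in Y. *)
pose h (y : nat * nat) := (ht y.1).1 y.2.
have ch y : continuous (h y) by case: (hht y.1) => + _ _; apply.
pose w (K : vietoris (cube R X)) : cube R (nat * nat) := fun y => box (Vmap (h y) (sval K)).
pose u n (z : cube R (nat * nat)) := (ht n).2 (fun k => z (n, k)).
have cu n : continuous (u n).
  move=> z; apply: continuous_comp; last by case: (hht n) => _ + _; apply.
  by apply: continuous_to_cube => k; exact: cube_proj_continuous.
have uw n K : `|fv K - u n (w K)| < en n by case: (hht n) => _ _; apply.
exists (nat * nat)%type, (fun z => to01 (glue_lim u z)), h; split.
- exact: countableP.
- by move=> z; apply: continuous_comp; [exact: glue_lim_continuous|exact: to01_continuous].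
- exact: ch.
- by apply: funext => K /=; rewrite (glue_lim_factor uw) to01_val.
Qed.
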